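(* Let $G$ be a finite simple undirected graph on $n\geq 3$ vertices satisfying: (a) $\delta(G)\geq \frac{n-1}{2}$; (b) $G$ has no perfect matching; (c) $G$ is triangle-free (contains no cycle of length $3$). Then $G$ is isomorphic either to the cycle $C_5$ or to the complete bipartite graph $K_{\frac{n-1}{2},\frac{n+1}{2}}$.
   Context: $\delta(G)$ denotes the minimum vertex degree of $G$. $C_5$ is the cycle on $5$ vertices. $K_{m,p}$ denotes the complete bipartite graph with parts of sizes $m$ and $p$. A triangle is a cycle of length $3$. *)

From mathcomp Require Import all_boot.
Set Implicit Arguments. Unset Strict Implicit. Unset Printing Implicit Defensive.

Definition simple_graph (T : finType) (e : rel T) : Prop :=
  irreflexive e /\ symmetric e.

Definition deg (T : finType) (e : rel T) (x : T) : nat := #|[set y | e x y]|.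

Definition triangle_free (T : finType) (e : rel T) : Prop :=
  forall x y z : T, ~ (e x y /\ e y z /\ e z x).

Definition perfect_matching (T : finType) (e : rel T) (M : {set {set T}}) : Prop :=
  (forall A, A \in M -> exists x y, e x y /\ A = [set x; y]) /\
  (forall v : T, #|[set A in M | v \in A]| = 1).

Definition has_perfect_matching (T : finType) (e : rel T) : Prop :=
  exists M, perfect_matching e M.

Definition graph_iso (T V : finType) (e : rel T) (e' : rel V) : Prop :=
  exists f : T -> V, bijective f /\ forall x y, e x y = e' (f x) (f y).

Definition C5_rel : rel 'I_5 :=
  fun i j => (j == (i.+1 %% 5) :> nat) || (i == (j.+1 %% 5) :> nat).

Definition Kbip_rel (m p : nat) : rel ('I_m + 'I_p) :=
  fun u v => match u, v with
             | inl _, inr _ | inr _, inl _ => true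
             | _, _ => false
             end.

From mathcomp Require Import all_boot zify.
Set Implicit Arguments. Unset Strict Implicit. Unset Printing Implicit Defensive.

(* Pick an edge xy.  By triangle-freeness N(x) and N(y) are disjoint.  If they
   cover every vertex, N(y) is one side of a bipartition; the degree bound then
   forces the graph to be complete bipartite with sides as balanced as possible,
   and since there is no perfect matching the sides have sizes (n-1)/2, (n+1)/2.
   Otherwise some z is adjacent to neither x nor y, so N(x), N(y) have size
   exactly (n-1)/2 and partition V \ {z}.  Then z has a neighbour a in N(x) and
   b in N(y), and counting the neighbourhoods of a, b, z gives n = 5; the
   vertices x, y, b, z, a then form an induced 5-cycle. *)

Lemma graph_iso_of_injective (T V : finType) (e : rel T) (e' : rel V) (g : V -> T) :
  injective g -> #|T| <= #|V| -> (forall u v, e (g u) (g v) = e' u v) ->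
  graph_iso e e'.
Proof.
move=> g_inj card_le g_hom; have [f gK fK] := inj_card_bij g_inj card_le.
by exists f; split; [exists g | move=> u v; rewrite -g_hom !fK].
Qed.

Lemma C5_rel_twin_free (i j : 'I_5) : C5_rel i =1 C5_rel j -> i = j.
Proof.
move=> /(_ (inord _)) eq_ij; apply: val_inj.
move: (eq_ij 0) (eq_ij 1) (eq_ij 2) (eq_ij 3) (eq_ij 4).
case: i j {eq_ij} => [[|[|[|[|[|i]]]]] ?] [[|[|[|[|[|j]]]]] ?] //;
  by rewrite /C5_rel !inordK.
Qed.

Lemma graph_iso_Kbip (T : finType) (e : rel T) (A : {set T}) :
  (forall u v, e u v = ((u \in A) != (v \in A))) ->
  graph_iso e (@Kbip_rel #|A| #|~: A|).
Proof.
move=> eE.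
pose g (s : 'I_#|A| + 'I_#|~: A|) :=
  match s with inl i => enum_val i | inr j => enum_val j end.
have gA i : g (inl i) \in A by apply: enum_valP.
have gNA j : g (inr j) \notin A by have := enum_valP j; rewrite inE.
apply: (@graph_iso_of_injective _ _ _ _ g); last first.
- by case=> i [] j; rewrite eE ?gA ?(negbTE (gNA _)).
- by rewrite card_sum !card_ord cardsC.
case=> i [] j /= eq_ij.
- by rewrite (enum_val_inj eq_ij).
- by have := gNA j; rewrite /= -eq_ij gA.
- by have := gNA i; rewrite /= eq_ij gA.
- by rewrite (enum_val_inj eq_ij).
Qed.

Lemma has_perfect_matching_of_balanced (T : finType) (e : rel T) (A : {set T}) :
  #|A| = #|~: A| -> (forall u v, u \in A -> v \notin A -> e u v) ->
  has_perfect_matching e.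
Proof.
move=> cardA e_across.
pose p (i : 'I_#|A|) := enum_val i.
pose q (i : 'I_#|A|) := enum_val (cast_ord cardA i).
have pA i : p i \in A by apply: enum_valP.
have qA i : q i \notin A by have := enum_valP (cast_ord cardA i); rewrite inE.
have pair_uniq v i j : v \in [set p i; q i] -> v \in [set p j; q j] -> i = j.
  rewrite !inE => /orP[]/eqP-> /orP[]/eqP.
  - by move/enum_val_inj.
  - by move=> eq_pq; have := qA j; rewrite -eq_pq pA.
  - by move=> eq_qp; have := qA i; rewrite eq_qp pA.
  - by move/enum_val_inj/cast_ord_inj.
have pair_cover v : exists i, v \in [set p i; q i].
  have [vA | vNA] := boolP (v \in A).
    by exists (enum_rank_in vA v); rewrite !inE /p (enum_rankK_in vA vA) eqxx.
  have vCA : v \in ~: A by rewrite inE.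
  exists (cast_ord (esym cardA) (enum_rank_in vCA v)).
  by rewrite !inE /q cast_ordKV (enum_rankK_in vCA vCA) eqxx orbT.
exists [set [set p i; q i] | i : 'I_#|A|]; split.
  by move=> _ /imsetP[i _ ->]; exists (p i), (q i); rewrite e_across.
move=> v; have [i vi] := pair_cover v.
suff -> : [set S in [set [set p i; q i] | i : 'I_#|A|] | v \in S] = [set [set p i; q i]].
  exact: cards1.
apply/setP => S; rewrite !inE; apply/andP/eqP => [[/imsetP[j _ ->] vj] | ->].
  by rewrite (pair_uniq v j i).
by split; first exact: imset_f.
Qed.

Section MinDegree.

Variables (T : finType) (e : rel T).
Hypotheses (e_irr : irreflexive e) (e_sym : symmetric e).
Hypothesis deg_ge : forall x, #|T|.-1 <= 2 * deg e x.

Local Notation n := #|T|.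
Local Notation nbhd x := [set y | e x y].

Definition bipartition (A : {set T}) := forall u v, e u v -> (u \in A) != (v \in A).

Lemma bipartitionC A : bipartition A -> bipartition (~: A).
Proof. by move=> bipA u v /bipA; rewrite !inE; do 2!case: (_ \in A). Qed.

Lemma bipartition_complete A :
  bipartition A -> #|A| <= #|~: A| -> forall u v, e u v = ((u \in A) != (v \in A)).
Proof.
move=> bipA A_small.
have nbhd_out v : v \notin A -> nbhd v = A.
  move=> vNA; apply/eqP; rewrite eqEcard; apply/andP; split.
    by apply/subsetP => w; rewrite inE => /bipA; rewrite (negbTE vNA) /= negbK.
  by have := deg_ge v; have := cardsC A; rewrite /deg; lia.
have e_out v w : v \notin A -> e v w = (w \in A).
  by move/nbhd_out/setP/(_ w); rewrite inE.
move=> u v; case uA: (u \in A); case vA: (v \in A) => /=.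
- by apply/negbTE/negP => /bipA; rewrite uA vA.
- by rewrite e_sym e_out ?vA.
- by rewrite e_out ?uA.
- by rewrite e_out ?uA.
Qed.

Lemma bipartition_odd_Kbip A :
  bipartition A -> ~ has_perfect_matching e ->
  odd n /\ graph_iso e (@Kbip_rel (half n) (half n.+1)).
Proof.
wlog A_small : A / #|A| <= #|~: A|.
  move=> wlog_A bipA; have [le_AC | /ltnW le_CA] := leqP #|A| #|~: A|.
    exact: wlog_A le_AC bipA.
  by apply: (wlog_A (~: A)); [rewrite setCK | exact: bipartitionC].
move=> bipA no_pm; have eA := bipartition_complete bipA A_small.
have cardA := cardsC A.
have n_odd : n = #|A|.*2.+1.
  have [balanced | unbalanced] := eqVneq #|A| #|~: A|.
    case: no_pm; apply: (has_perfect_matching_of_balanced balanced) => u v uA vNA.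
    by rewrite eA uA (negbTE vNA).
  have [v] : exists v, v \in ~: A by apply/set0Pn; rewrite -card_gt0; lia.
  rewrite inE => vNA.
  have nbhd_v : nbhd v = A by apply/setP => w; rewrite inE eA (negbTE vNA) /= negbK.
  by have := deg_ge v; rewrite /deg nbhd_v; lia.
split; first by rewrite n_odd /= odd_double.
have -> : half n = #|A| by lia.
have -> : half n.+1 = #|~: A| by lia.
exact: graph_iso_Kbip eA.
Qed.

Hypothesis e_tf : triangle_free e.

Lemma no_triangle x y z : e x y -> e y z -> e z x -> False.
Proof. by move=> exy eyz ezx; apply: (e_tf (conj exy (conj eyz ezx))). Qed.

Lemma nbhd_bipartition x y :
  e x y -> (forall t, e x t || e y t) -> bipartition (nbhd y).
Proof.
move=> exy cover u v euv; rewrite !inE.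
case yu: (e y u); case yv: (e y v) => //=.
  by case: (no_triangle yu euv); rewrite e_sym.
have /orP[xu|] := cover u; last by rewrite yu.
have /orP[xv|] := cover v; last by rewrite yv.
by case: (no_triangle xu euv); rewrite e_sym.
Qed.

Lemma card_nbhdU x y : e x y -> #|nbhd x :|: nbhd y| = #|nbhd x| + #|nbhd y|.
Proof.
move=> exy; rewrite cardsU; suff -> : nbhd x :&: nbhd y = set0 by rewrite cards0 subn0.
apply/setP => t; rewrite !inE; apply/negbTE/andP => -[xt yt].
by apply: (no_triangle exy yt); rewrite e_sym.
Qed.

Lemma nbhdU_sub x y z : ~~ e x z -> ~~ e y z -> nbhd x :|: nbhd y \subset [set~ z].
Proof.
move=> nxz nyz; apply/subsetP => t; rewrite !inE.
by apply: contraTneq => ->; rewrite negb_or nxz.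
Qed.

Section NonadjacentVertex.

Variables x y z : T.
Hypotheses (exy : e x y) (nxz : ~~ e x z) (nyz : ~~ e y z).

Lemma double_card_nbhd : n.-1 = (#|nbhd x|).*2 /\ n.-1 = (#|nbhd y|).*2.
Proof.
have := subset_leq_card (nbhdU_sub nxz nyz); rewrite card_nbhdU // cardsC1.
by have := deg_ge x; have := deg_ge y; rewrite /deg; lia.
Qed.

Lemma nbhdU_nonadjacent : nbhd x :|: nbhd y = [set~ z].
Proof.
apply/eqP; rewrite eqEcard nbhdU_sub // card_nbhdU // cardsC1.
by have [] := double_card_nbhd; lia.
Qed.

Lemma in_nbhdU_nonadjacent t : e x t || e y t = (t != z).
Proof. by have /setP/(_ t) := nbhdU_nonadjacent; rewrite !inE. Qed.

Lemma common_neighbour : exists2 a, e z a & e x a.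
Proof.
have [a /andP[za xa] | no_common] := pickP [pred a | e z a && e x a].
  by exists a.
have sub : nbhd z \subset nbhd y :\ x.
  apply/subsetP => t; rewrite !inE => zt.
  have := in_nbhdU_nonadjacent t; have := no_common t; rewrite /= zt /= => -> /= ->.
  have -> : t != z by apply: contraTneq zt => ->; rewrite e_irr.
  by rewrite andbT; apply: contraTneq zt => ->; rewrite e_sym (negbTE nxz).
have := subset_leq_card sub; have := cardsD1 x (nbhd y); rewrite inE e_sym exy.
by have := deg_ge z; have [] := double_card_nbhd; rewrite /deg; lia.
Qed.

Lemma nbhd_common_neighbour a :
  e z a -> e x a -> nbhd a \subset z |: (nbhd y :\: nbhd z).
Proof.
move=> za xa; apply/subsetP => t; rewrite !inE => at_.
have [// | tz] := eqVneq t z.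
have /orP[xt | yt] : e x t || e y t by rewrite in_nbhdU_nonadjacent.
  by case: (no_triangle xa at_); rewrite e_sym.
rewrite yt andbT; apply/negP => zt.
by apply: (no_triangle za at_); rewrite e_sym.
Qed.

End NonadjacentVertex.

Lemma order_eq5 x y z : e x y -> ~~ e x z -> ~~ e y z -> n = 5.
Proof.
move=> exy nxz nyz; have eyx : e y x by rewrite e_sym.
have [a za xa] := common_neighbour exy nxz nyz.
have [b zb yb] := common_neighbour eyx nyz nxz.
have [cx cy] := double_card_nbhd exy nxz nyz.
(* N(a), N(b) and N(z) lie in {z} + N(y)\N(z), {z} + N(x)\N(z) and N(x) + N(y),
   so deg a + deg b + deg z <= n + 1, i.e. n <= 5; and {y, a} in N(x) gives n >= 5. *)
have := subset_leq_card (nbhd_common_neighbour exy nxz nyz za xa).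
have := subset_leq_card (nbhd_common_neighbour eyx nyz nxz zb yb).
rewrite !cardsU1 !cardsD => le_b le_a.
have le_z : nbhd z \subset (nbhd x :&: nbhd z) :|: (nbhd y :&: nbhd z).
  rewrite -setIUl (nbhdU_nonadjacent exy nxz nyz); apply/subsetP => t.
  by rewrite !inE => zt; rewrite zt andbT; apply: contraTneq zt => ->; rewrite e_irr.
have := subset_leq_card le_z; rewrite cardsU.
have := subset_leq_card (subsetIl (nbhd x) (nbhd z)).
have := subset_leq_card (subsetIl (nbhd y) (nbhd z)).
have := leq_b1 (z \notin nbhd x :\: nbhd z); have := leq_b1 (z \notin nbhd y :\: nbhd z).
have ay : a != y by apply: contraTneq za => ->; rewrite e_sym (negbTE nyz).
have : #|[set y; a]| <= #|nbhd x|.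
  by apply/subset_leq_card/subsetP => t; rewrite !inE => /orP[]/eqP->; rewrite // e_sym.
rewrite cards2 eq_sym ay.
by have := deg_ge a; have := deg_ge b; have := deg_ge z; rewrite /deg; lia.
Qed.

Lemma nonadjacent_iso_C5 x y z : e x y -> ~~ e x z -> ~~ e y z -> graph_iso e C5_rel.
Proof.
move=> exy nxz nyz; have eyx : e y x by rewrite e_sym.
have [a za xa] := common_neighbour exy nxz nyz.
have [b zb yb] := common_neighbour eyx nyz nxz.
have nxb : e x b = false.
  by apply/negP => xb; apply: (no_triangle eyx xb); rewrite e_sym.
have nya : e y a = false.
  by apply/negP => ya; apply: (no_triangle exy ya); rewrite e_sym.
have nab : e a b = false.
  by apply/negP => ab; apply: (no_triangle za ab); rewrite e_sym.
have [nxz' nyz'] := (negbTE nxz, negbTE nyz).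
pose g (i : 'I_5) := match val i with 0 => x | 1 => y | 2 => b | 3 => z | _ => a end.
have g_hom i j : e (g i) (g j) = C5_rel i j.
  case: i j => [[|[|[|[|[|i]]]]] ?] [[|[|[|[|[|j]]]]] ?] //=; rewrite /C5_rel /=;
  by rewrite ?e_irr ?exy ?yb ?zb ?za ?xa ?nxb ?nya ?nab ?nxz' ?nyz' //
             e_sym ?exy ?yb ?zb ?za ?xa ?nxb ?nya ?nab ?nxz' ?nyz'.
apply: (graph_iso_of_injective _ _ g_hom).
  by move=> i j gij; apply: C5_rel_twin_free => k; rewrite -!g_hom gij.
by rewrite card_ord (order_eq5 exy nxz nyz).
Qed.

End MinDegree.

Theorem theorem5 (T : finType) (e : rel T) :
  simple_graph e ->
  3 <= #|T| ->
  (forall x : T, (#|T|).-1 <= 2 * deg e x) ->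
  ~ has_perfect_matching e ->
  triangle_free e ->
  graph_iso e C5_rel \/
  (odd #|T| /\ graph_iso e (@Kbip_rel (half #|T|) (half #|T|.+1))).
Proof.
move=> [e_irr e_sym] n_ge3 deg_ge no_pm e_tf.
have /card_gt0P[x _] : 0 < #|T| by lia.
have /card_gt0P[y] : 0 < deg e x by have := deg_ge x; lia.
rewrite inE => exy.
have [cover | /forallPn[z]] := boolP [forall t, e x t || e y t].
  right; apply: (bipartition_odd_Kbip e_sym deg_ge _ no_pm).
  exact: (nbhd_bipartition e_sym e_tf exy (forallP cover)).
rewrite negb_or => /andP[nxz nyz]; left.
exact: (nonadjacent_iso_C5 e_irr e_sym deg_ge e_tf exy nxz nyz).
Qed.
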